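(* Let $\mathbb{R}^n_s$ be $\mathbb{R}^n$ with a non-degenerate symmetric bilinear form $\langle\cdot,\cdot\rangle$ of signature $(n-s,s)$, and let $G\subset\mathrm{Iso}(\mathbb{R}^n_s)$ be a real Zariski-closed subgroup whose centralizer in $\mathrm{Iso}(\mathbb{R}^n_s)$ acts transitively on $\mathbb{R}^n$. Fix $p\in\mathbb{R}^n$ and let $(\cdot,\cdot)$ be the orbit metric on $G$, i.e. the pullback of $\langle\cdot,\cdot\rangle$ restricted to the orbit $F_p=G.p$ via the orbit map $g\mapsto g.p$ (a left-invariant, possibly degenerate, field of symmetric bilinear forms). Then $(\cdot,\cdot)$ is bi-invariant: for all left-invariant vector fields $X,Y,Z$ on $G$, $$([X,Y],Z)=-(Y,[X,Z]).$$ *)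

From HB Require Import structures.
From mathcomp Require Import all_boot all_order all_algebra.
From mathcomp Require Import all_classical all_reals all_analysis.
From mathcomp Require mpoly.

Set Implicit Arguments.
Unset Strict Implicit.
Unset Printing Implicit Defensive.

Import Order.TTheory GRing.Theory Num.Theory.
Local Open Scope ring_scope.
Local Open Scope classical_set_scope.

Section Affine.
Variables (R : realType) (n : nat).

(** An affine map x |-> A x + b of R^n, represented by the pair (A, b).
    The group Iso(R^n_s) is realised as a subgroup of the affine group. *)
Definition aff := ('M[R]_n * 'cV[R]_n)%type.

Definition aone : aff := (1%:M, 0).
Definition amul (g h : aff) : aff := (g.1 *m h.1, g.1 *m h.2 + g.2).
Definition ainv (g : aff) : aff := (invmx g.1, - (invmx g.1 *m g.2)).
Definition aact (g : aff) (x : 'cV[R]_n) : 'cV[R]_n := g.1 *m x + g.2.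

Definition Jform (s : nat) : 'M[R]_n :=
  diag_mx (\row_(i < n) (if (i < n - s)%N then 1 else -1)).

Definition bil (s : nat) (x y : 'cV[R]_n) : R := (x^T *m Jform s *m y) 0 0.

Definition is_iso (s : nat) (g : aff) : Prop := g.1^T *m Jform s *m g.1 = Jform s.

Definition iso_subgroup (s : nat) (G : set aff) : Prop :=
  (forall g, G g -> is_iso s g) /\ G aone /\
  (forall g h, G g -> G h -> G (amul g h)) /\ (forall g, G g -> G (ainv g)).

Definition coords (g : aff) : 'I_(n * n + n) -> R :=
  fun i => match fintype.split i with
           | inl k => mxvec g.1 0 k
           | inr k => g.2 k 0
           end.

Definition zariski_closed_in_iso (s : nat) (G : set aff) : Prop :=
  exists P : set (mpoly.mpoly (n * n + n) R),
    forall g, G g <-> (is_iso s g /\ forall q, P q -> mpoly.meval (coords g) q = 0).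

Definition centralizer_transitive (s : nat) (G : set aff) : Prop :=
  forall x y : 'cV[R]_n, exists c : aff,
    is_iso s c /\ (forall g, G g -> amul c g = amul g c) /\ aact c x = y.

(** Lie algebra of G (a closed subgroup of the affine group, viewed inside
    GL(n+1) as block matrices [[A, b],[0, 1]]): elements (X, v) (the block
    matrix [[X, v],[0, 0]]) that are velocities at t = 0 of curves in G
    through the identity. *)
Definition lie_alg (G : set aff) (X : aff) : Prop :=
  exists c : R -> aff, (forall t, G (c t)) /\ c 0 = aone /\
    (forall i j, is_derive (0 : R) (1 : R) (fun t => (c t).1 i j) (X.1 i j)) /\
    (forall i j, is_derive (0 : R) (1 : R) (fun t => (c t).2 i j) (X.2 i j)).

(** Lie bracket = matrix commutator of [[X, v],[0,0]] and [[Y, w],[0,0]]. *)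
Definition lie_br (X Y : aff) : aff :=
  (X.1 *m Y.1 - Y.1 *m X.1, X.1 *m Y.2 - Y.1 *m X.2).

(** Differential at the identity of the orbit map g |-> g.p, applied to X. *)
Definition inf_act (X : aff) (p : 'cV[R]_n) : 'cV[R]_n := X.1 *m p + X.2.

(** The orbit metric at the identity (it is left-invariant, hence determined
    by its value on the Lie algebra). *)
Definition orbit_metric (s : nat) (p : 'cV[R]_n) (X Y : aff) : R :=
  bil s (inf_act X p) (inf_act Y p).

End Affine.

(* Elements of the Lie algebra of G are infinitesimal isometries: differentiating
   g(t)^T J g(t) = J at t = 0 shows that their linear parts are J-skew.  An element
   c of the centralizer of G also commutes with the Lie algebra, so X.(c q) = c (X.q);
   as c is an isometry, q |-> <Y.q, Z.q> is invariant under the centralizer, hence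
   constant by transitivity.  This function is quadratic in q, so its linear part
   vanishes: <Y v, Z.p> = - <Y.p, Z v>.  Since [X,Y].p = X (Y.p) - Y (X.p), the
   identity follows from this with v = X.p together with the skewness of X. *)

From HB Require Import structures.
From mathcomp Require Import all_boot all_order all_algebra.
From mathcomp Require Import all_classical all_reals all_analysis.
From mathcomp Require Import lra.

Set Implicit Arguments.
Unset Strict Implicit.
Unset Printing Implicit Defensive.

Import Order.TTheory GRing.Theory Num.Theory numFieldNormedType.Exports.
Local Open Scope ring_scope.

Section MatrixDerivative.
Variable R : numFieldType.

Definition mx_derive m k (M : R -> 'M[R]_(m, k)) (x : R) (D : 'M[R]_(m, k)) :=
  forall i j, is_derive x 1 (fun t => M t i j) (D i j).

Context {x : R}.

Lemma mx_derive_unique m k (M : R -> 'M[R]_(m, k)) D E :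
  mx_derive M x D -> mx_derive M x E -> D = E.
Proof.
by move=> dD dE; apply/matrixP => i j; case: (dD i j) => _ <-; case: (dE i j) => _ <-.
Qed.

Lemma eq_mx_derive m k (M N : R -> 'M[R]_(m, k)) D :
  M =1 N -> mx_derive M x D -> mx_derive N x D.
Proof. by move=> /funext ->. Qed.

Lemma mx_derive_cst m k (A : 'M[R]_(m, k)) : mx_derive (fun _ => A) x 0.
Proof. by move=> i j; rewrite mxE; exact: is_derive_cst. Qed.

Lemma mx_derive_add m k (M M' : R -> 'M[R]_(m, k)) D D' :
  mx_derive M x D -> mx_derive M' x D' -> mx_derive (fun t => M t + M' t) x (D + D').
Proof.
move=> dM dM' i j; rewrite mxE.
have -> : (fun t => (M t + M' t) i j) = (fun t => M t i j) + (fun t => M' t i j).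
  by apply/funext => t; rewrite mxE.
exact: is_deriveD.
Qed.

Lemma mx_derive_trmx m k (M : R -> 'M[R]_(m, k)) D :
  mx_derive M x D -> mx_derive (fun t => (M t)^T) x D^T.
Proof.
move=> dM i j; rewrite mxE.
by have -> : (fun t => (M t)^T i j) = (fun t => M t j i) by apply/funext => t; rewrite mxE.
Qed.

Lemma mx_derive_mul m k l (M : R -> 'M[R]_(m, k)) (N : R -> 'M[R]_(k, l)) D E :
  mx_derive M x D -> mx_derive N x E ->
  mx_derive (fun t => M t *m N t) x (D *m N x + M x *m E).
Proof.
move=> dM dN i j.
have -> : (fun t => (M t *m N t) i j) = \sum_a ((fun t => M t i a) * (fun t => N t a j)).
  by apply/funext => t; rewrite mxE fct_sumE; apply: eq_bigr.
apply: (is_derive_eq (is_derive_sum (fun a => is_deriveM (dM i a) (dN a j)))).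
rewrite !mxE -big_split; apply: eq_bigr => a _ /=.
by rewrite addrC; congr (_ + _); exact: mulrC.
Qed.

Lemma mx_derive_mull m k l (A : 'M[R]_(m, k)) (N : R -> 'M[R]_(k, l)) E :
  mx_derive N x E -> mx_derive (fun t => A *m N t) x (A *m E).
Proof. by move=> dN; have := mx_derive_mul (mx_derive_cst A) dN; rewrite mul0mx add0r. Qed.

Lemma mx_derive_mulr m k l (M : R -> 'M[R]_(m, k)) D (B : 'M[R]_(k, l)) :
  mx_derive M x D -> mx_derive (fun t => M t *m B) x (D *m B).
Proof. by move=> dM; have := mx_derive_mul dM (mx_derive_cst B); rewrite mulmx0 addr0. Qed.

End MatrixDerivative.

Section OrbitMetric.
Variables (R : realType) (n s : nat).
Implicit Types (u v w p q : 'cV[R]_n) (G : set (aff R n)) (c X Y Z : aff R n).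
Local Notation J := (Jform R n s).

Lemma bilDl u v w : bil s (u + v) w = bil s u w + bil s v w.
Proof. by rewrite /bil linearD /= !mulmxDl mxE. Qed.

Lemma bilDr u v w : bil s u (v + w) = bil s u v + bil s u w.
Proof. by rewrite /bil mulmxDr mxE. Qed.

Lemma bilNl u w : bil s (- u) w = - bil s u w.
Proof. by rewrite /bil linearN /= !mulNmx mxE. Qed.

Lemma bilNr u w : bil s u (- w) = - bil s u w.
Proof. by rewrite /bil mulmxN mxE. Qed.

Lemma bil_iso c u w : is_iso s c -> bil s (c.1 *m u) (c.1 *m w) = bil s u w.
Proof.
by move=> iso_c; rewrite /bil trmx_mul -!mulmxA (mulmxA c.1^T) (mulmxA _ c.1) iso_c.
Qed.

Lemma bil_skew (A : 'M[R]_n) u w :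
  A^T *m J + J *m A = 0 -> bil s (A *m u) w = - bil s u (A *m w).
Proof.
move=> skewA; apply/eqP; rewrite -addr_eq0.
have -> : bil s (A *m u) w + bil s u (A *m w) = (u^T *m (A^T *m J + J *m A) *m w) 0 0.
  by rewrite mulmxDr mulmxDl mxE /bil trmx_mul !mulmxA.
by rewrite skewA mulmx0 mul0mx mxE.
Qed.

Lemma lie_alg_skew G X : (forall g, G g -> is_iso s g) -> lie_alg G X ->
  X.1^T *m J + J *m X.1 = 0.
Proof.
move=> isoG [c [Gc [c0 [dc _]]]].
have dform : mx_derive (fun t => (c t).1^T *m J *m (c t).1) 0 (X.1^T *m J + J *m X.1).
  have := mx_derive_mul (mx_derive_mulr J (mx_derive_trmx dc)) dc.
  by rewrite c0 /= trmx1 mul1mx mulmx1.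
apply: (mx_derive_unique dform).
have -> : (fun t => (c t).1^T *m J *m (c t).1) = fun=> J by apply/funext => t; exact: isoG.
exact: mx_derive_cst.
Qed.

Lemma inf_act_centralizer G X c q : lie_alg G X ->
  (forall g, G g -> amul c g = amul g c) -> inf_act X (aact c q) = c.1 *m inf_act X q.
Proof.
move=> [g [Gg [_ [dg1 dg2]]]] cG.
have gc t : amul c (g t) = amul (g t) c by exact: cG.
have dcg1 : mx_derive (fun t => (amul (g t) c).1) 0 (c.1 *m X.1).
  by apply: eq_mx_derive (mx_derive_mull c.1 dg1) => t; rewrite -gc.
have dcg2 : mx_derive (fun t => (amul (g t) c).2) 0 (c.1 *m X.2 + 0).
  apply: eq_mx_derive (mx_derive_add (mx_derive_mull c.1 dg2) (mx_derive_cst c.2)).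
  by move=> t; rewrite -gc.
have dgc1 : mx_derive (fun t => (amul (g t) c).1) 0 (X.1 *m c.1) := mx_derive_mulr c.1 dg1.
have dgc2 : mx_derive (fun t => (amul (g t) c).2) 0 (X.1 *m c.2 + X.2) :=
  mx_derive_add (mx_derive_mulr c.2 dg1) dg2.
rewrite /inf_act /aact !mulmxDr !mulmxA (mx_derive_unique dcg1 dgc1).
by rewrite -[c.1 *m X.2]addr0 (mx_derive_unique dcg2 dgc2) addrA.
Qed.

Lemma orbit_form_const G Y Z p q : centralizer_transitive s G ->
  lie_alg G Y -> lie_alg G Z ->
  bil s (inf_act Y q) (inf_act Z q) = bil s (inf_act Y p) (inf_act Z p).
Proof.
move=> transG LY LZ; have [c [iso_c [cG <-]]] := transG p q.
by rewrite (inf_act_centralizer _ LY cG) (inf_act_centralizer _ LZ cG) bil_iso.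
Qed.

Lemma polarize_const_orbit_form Y Z p v :
  (forall q, bil s (inf_act Y q) (inf_act Z q) = bil s (inf_act Y p) (inf_act Z p)) ->
  bil s (Y.1 *m v) (inf_act Z p) = - bil s (inf_act Y p) (Z.1 *m v).
Proof.
(* A constant quadratic function has no linear part: compare q = p + v and q = p - v. *)
move=> form_const.
have inf_actD W w : inf_act W (p + w) = inf_act W p + W.1 *m w.
  by rewrite /inf_act mulmxDr addrAC.
have := form_const (p + v); have := form_const (p - v).
rewrite !inf_actD !mulmxN !bilDl !bilDr !bilNl !bilNr.
lra.
Qed.

Lemma inf_act_lie_br X W p :
  inf_act (lie_br X W) p = X.1 *m inf_act W p - W.1 *m inf_act X p.
Proof. by rewrite /inf_act /lie_br /= mulmxBl !mulmxDr !mulmxA opprD addrACA. Qed.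

End OrbitMetric.

Theorem proposition4p5 (R : realType) (n s : nat) (G : set (aff R n))
  (p : 'cV[R]_n) :
  (s <= n)%N ->
  iso_subgroup s G ->
  zariski_closed_in_iso s G ->
  centralizer_transitive s G ->
  forall X Y Z : aff R n, lie_alg G X -> lie_alg G Y -> lie_alg G Z ->
    orbit_metric s p (lie_br X Y) Z = - orbit_metric s p Y (lie_br X Z).
Proof.
move=> _ [isoG _] _ transG X Y Z LX LY LZ.
have skewX := lie_alg_skew isoG LX.
have polar := polarize_const_orbit_form (inf_act X p)
  (fun q => orbit_form_const p q transG LY LZ).
(* bilDr is instantiated by hand: unrestricted, it would unfold inf_act Z p on the left. *)
rewrite /orbit_metric !inf_act_lie_br bilDl bilNl (bilDr s (inf_act Y p)) bilNr.
by rewrite (bil_skew _ _ skewX) polar opprD.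
Qed.
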